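(* Let $X$ be a topological space and let $k\ge1$ be an integer. The following statements are equivalent: (1) $X$ is a uniformizable functional Alexandroff space; (1') $X$ is a uniformizable $k$-primal space; (2) $X$ is a uniformizable Alexandroff space such that $V(x)$ is finite for each $x\in X$; (3) $\{V(a):a\in X\}$ is a partition of $X$ into finite open subsets; (4) there exists a partition $\mathcal P$ of $X$ into finite subsets such that $\mathcal F_{\mathcal P}:=\{\alpha\subseteq X\times X:\bigcup\{D\times D:D\in\mathcal P\}\subseteq\alpha\}$ is a uniform structure compatible with the topology of $X$; (5) there exists a map $f:X\to X$ with $\mathrm{Per}(f)=X$ such that the topology of $X$ is the functional Alexandroff topology associated to $f$.
   Context: For a topological space $X$ and $a\in X$, $V(a):=\bigcap\{U: U\text{ open}, a\in U\}$; $X$ is Alexandroff if each $V(a)$ is open. For $f:X\to X$ and $a\in X$, $V_f(a):=\{x\in X:\exists n\ge0,\ f^n(x)=a\}$; the functional Alexandroff topology associated to $f$ is the topology with basis $\{V_f(a):a\in X\}$, and $X$ is a functional Alexandroff space if its topology is the functional Alexandroff topology of some $f:X\to X$. $X$ is $k$-primal if there are $f_1,\dots,f_k:X\to X$ such that for every $a\in X$, $V_{f_1}(a)\cap\dots\cap V_{f_k}(a)$ is open and is the smallest open neighbourhood of $a$. $\mathrm{Per}(f)=\{x\in X:\exists n\ge1,\ f^n(x)=x\}$ is the set of periodic points of $f$. A uniform structure $\mathcal F$ on $X$ (nonempty family of subsets of $X\times X$ containing $\Delta_X$ in each member, closed under supersets, finite intersections and inverses, and such that each $\alpha\in\mathcal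 F$ contains $\beta\circ\beta$ for some $\beta\in\mathcal F$) is compatible with the topology of $X$ if the topology $\{U:\forall x\in U\ \exists\alpha\in\mathcal F,\ \alpha[x]\subseteq U\}$, $\alpha[x]=\{y:(x,y)\in\alpha\}$, equals it; $X$ is uniformizable if a compatible uniform structure exists. *)

From mathcomp Require Import all_boot all_order.
From mathcomp Require Import boolp classical_sets cardinality topology.
Set Implicit Arguments. Unset Strict Implicit. Unset Printing Implicit Defensive.
Local Open Scope classical_set_scope.

Section Defs.
Variable X : topologicalType.

Definition Vmin (a : X) : set X := [set x | forall U : set X, open U -> U a -> U x].

Definition alexandroff : Prop := forall a : X, open (Vmin a).

Definition Vf (f : X -> X) (a : X) : set X := [set x | exists n : nat, iter n f x = a].

(* the topology of X is the topology with basis {V_f(a) : a in X}: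
   open sets are exactly the unions of subfamilies of the basis *)
Definition is_functional_topology (f : X -> X) : Prop :=
  forall U : set X, open U <-> exists A : set X, U = \bigcup_(a in A) Vf f a.

Definition functional_alexandroff : Prop :=
  exists f : X -> X, is_functional_topology f.

Definition smallest_open_nbhd (W : set X) (a : X) : Prop :=
  [/\ open W, W a & forall U : set X, open U -> U a -> W `<=` U].

Definition k_primal (k : nat) : Prop :=
  exists fs : 'I_k -> X -> X, forall a : X,
    smallest_open_nbhd (\bigcap_(i in [set: 'I_k]) Vf (fs i) a) a.

Definition Per (f : X -> X) : set X := [set x | exists n : nat, (0 < n)%N /\ iter n f x = x].

Definition rel_inv (al : set (X * X)) : set (X * X) := [set p | al (p.2, p.1)].
Definition rel_comp (al be : set (X * X)) : set (X * X) :=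
  [set p | exists y : X, al (p.1, y) /\ be (y, p.2)].

Definition uniform_structure (F : set (set (X * X))) : Prop :=
  F !=set0 /\ (forall al, F al -> forall x : X, al (x, x)) /\
  [/\ (forall al be, F al -> al `<=` be -> F be),
      (forall al be, F al -> F be -> F (al `&` be)),
      (forall al, F al -> F (rel_inv al)) &
      (forall al, F al -> exists be, F be /\ rel_comp be be `<=` al)].

Definition compatible (F : set (set (X * X))) : Prop :=
  forall U : set X, open U <->
    (forall x, U x -> exists al, F al /\ [set y | al (x, y)] `<=` U).

Definition uniformizable : Prop :=
  exists F : set (set (X * X)), uniform_structure F /\ compatible F.

Definition is_partition (P : set (set X)) : Prop :=
  [/\ (forall D, P D -> D !=set0),
      (forall D E, P D -> P E -> D = E \/ D `&` E = set0) &
      (forall x : X, exists D, P D /\ D x)].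

Definition F_of_partition (P : set (set X)) : set (set (X * X)) :=
  [set al | forall D, P D -> forall x y : X, D x -> D y -> al (x, y)].

End Defs.

From mathcomp Require Import all_boot all_order.
From mathcomp Require Import boolp classical_sets cardinality topology.
From mathcomp Require Import finmap.
Set Implicit Arguments. Unset Strict Implicit. Unset Printing Implicit Defensive.
Local Open Scope classical_set_scope.

(* A uniformizable space is R0: if x lies in every open set around y, then y
   lies in every open set around x.  In an R0 space the minimal neighbourhoods
   V(a) partition X.  In a functional Alexandroff space V(a) = V_f(a), so R0
   makes every point f-periodic and each V(a) a finite f-cycle.  Conversely, if
   the V(a) partition X into finite open sets, a map running cyclically through
   each block has V_f(a) = V(a), and the entourages containing every D x D form
   a compatible uniformity.  In a k-primal space V(a) lies inside V_{f_1}(a),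
   and R0 again forces it to be a finite f_1-cycle. *)

Section iterates.
Variables (T : Type) (f : T -> T).

Lemma iter_mul_period p x n : iter p f x = x -> iter (n * p) f x = x.
Proof. by move=> fpx; elim: n => // n IHn; rewrite mulSn iterD IHn fpx. Qed.

Lemma iter_mod_period p x m : iter p f x = x -> iter m f x = iter (m %% p) f x.
Proof. by move=> fpx; rewrite {1}(divn_eq m p) addnC iterD iter_mul_period. Qed.

Lemma finite_forward_orbit p x : (0 < p)%N -> iter p f x = x ->
  finite_set [set y | exists n, iter n f x = y].
Proof.
move=> p_gt0 fpx.
apply: (sub_finite_set _ (finite_image (fun n => iter n f x) (finite_II p))).
move=> _ [n <-]; exists (n %% p); first by rewrite /= ltn_pmod.
by rewrite -iter_mod_period.
Qed.

Lemma finite_iter_component x :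
  finite_set [set y | (exists n, iter n f x = y) /\ exists m, iter m f y = x].
Proof.
have [[p [p_gt0 fpx]]|aperiodic] := pselect (exists p, (0 < p)%N /\ iter p f x = x).
  by apply: (sub_finite_set _ (finite_forward_orbit p_gt0 fpx)) => y [].
apply: (sub_finite_set _ (finite_set1 x)) => _ [[n <-] [m fmnx]].
have /eqP : (m + n = 0)%N.
  apply: contrapT => /eqP; rewrite -lt0n => mn_gt0.
  by apply: aperiodic; exists (m + n)%N; rewrite iterD fmnx.
by rewrite addn_eq0 => /andP[_ /eqP->].
Qed.

End iterates.

Section next_cycle.
Variables (T : eqType) (p : seq T).
Hypothesis p_uniq : uniq p.

Lemma rot_next_traject x : x \in p ->
  exists2 q, x :: q =i p & rcons q x = traject (next p) (next p x) (size p).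
Proof.
case/rot_to=> i q pq; exists q; first by move=> y; rewrite -pq mem_rot.
have /fpathE -> : fcycle (next p) (x :: q) by rewrite -pq rot_cycle cycle_next.
by rewrite size_rcons -(size_rot i p) pq.
Qed.

Lemma iter_size_next x : x \in p -> iter (size p) (next p) x = x.
Proof.
case/rot_next_traject=> q _ /(congr1 (last x)).
by rewrite last_rcons last_traject.
Qed.

Lemma iter_next_onto x y : x \in p -> y \in p -> exists n, iter n (next p) x = y.
Proof.
case/rot_next_traject=> q qp qxE; rewrite -qp -mem_rcons qxE.
by case/trajectP=> n _ ->; exists n.+1; rewrite iterSr.
Qed.

End next_cycle.

Section block_cycle.
Variables (T : eqType) (blk : T -> seq T).
Hypotheses (blk_uniq : forall x, uniq (blk x)) (blk_self : forall x, x \in blk x)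
  (blk_eq : forall x y, y \in blk x -> blk y = blk x).

Definition block_cycle x := next (blk x) x.

Lemma iter_block_cycle n x : iter n block_cycle x = iter n (next (blk x)) x.
Proof.
have blk_iter m : blk (iter m block_cycle x) = blk x.
  by elim: m => //= m IHm; rewrite (@blk_eq (iter m block_cycle x)) // mem_next.
by elim: n => //= n IHn; rewrite -IHn -(blk_iter n).
Qed.

Lemma block_cycle_periodic x : exists n, (0 < n)%N /\ iter n block_cycle x = x.
Proof.
exists (size (blk x)); split; first by case: (blk x) (blk_self x).
by rewrite iter_block_cycle iter_size_next.
Qed.

Lemma iter_block_cycleP x y : (exists n, iter n block_cycle x = y) <-> y \in blk x.
Proof.
split=> [[n <-]|/(iter_next_onto (blk_uniq x) (blk_self x))[n <-]].
  by rewrite iter_block_cycle; elim: n => //= n IHn; rewrite mem_next.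
by exists n; rewrite iter_block_cycle.
Qed.

End block_cycle.

Section specialization.
Variable X : topologicalType.
Implicit Types (a x y : X) (U W : set X).

Lemma Vmin_refl a : Vmin a a. Proof. by move=> U. Qed.

Lemma Vmin_trans a x y : Vmin a x -> Vmin x y -> Vmin a y.
Proof. by move=> ax xy U oU Ua; apply: (xy U oU); apply: ax. Qed.

Lemma Vmin_sub U a : open U -> U a -> Vmin a `<=` U.
Proof. by move=> oU Ua x; apply. Qed.

Lemma bigcup_Vmin U : (forall a, U a -> Vmin a `<=` U) -> \bigcup_(a in U) Vmin a = U.
Proof.
by move=> VU; apply/seteqP; split=> [x [a /VU]|x Ux]; [apply|exists x].
Qed.

Lemma alexandroff_open U : alexandroff X -> (forall a, U a -> Vmin a `<=` U) -> open U.
Proof. by move=> alex /bigcup_Vmin <-; apply: bigcup_open. Qed.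

Lemma smallest_open_nbhdE W a : smallest_open_nbhd W a -> W = Vmin a.
Proof.
by case=> oW Wa Wmin; apply/seteqP; split=> [x Wx U oU Ua|x]; [exact: Wmin|apply].
Qed.

Lemma smallest_open_nbhd_Vmin a : open (Vmin a) -> smallest_open_nbhd (Vmin a) a.
Proof. by move=> oV; split=> // U; apply: Vmin_sub. Qed.

(* [Vmin y x] says that [y] is in the closure of [x]: this is the R0 axiom. *)
Definition R0_space := forall x y, Vmin y x -> Vmin x y.

Lemma R0_Vmin_eq a x : R0_space -> Vmin a x -> Vmin x = Vmin a.
Proof.
move=> R0 ax; apply/seteqP; split=> y; last exact: Vmin_trans (R0 _ _ ax).
exact: Vmin_trans.
Qed.

Lemma R0_Vmin_partition : R0_space <-> is_partition [set D | exists a, D = Vmin a].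
Proof.
split=> [R0|[_ Vdisj _] x y yx].
  split=> [_ [a ->]|_ _ [a ->] [b ->]|x].
  - by exists a.
  - have [[z [az bz]]|disj] := pselect (exists z, Vmin a z /\ Vmin b z).
      by left; rewrite -(R0_Vmin_eq R0 az) (R0_Vmin_eq R0 bz).
    by right; apply/seteqP; split=> // z [az bz]; apply: disj; exists z.
  - by exists (Vmin x); split; [exists x|].
have [<-|yx0] := Vdisj _ _ (ex_intro _ y erefl) (ex_intro _ x erefl).
  exact: Vmin_refl.
have : (Vmin y `&` Vmin x) x by split=> //; apply: Vmin_refl.
by rewrite yx0.
Qed.

Lemma uniformizable_R0 : uniformizable X -> R0_space.
Proof.
move=> [F [[_ [F_diag [_ _ F_inv F_comp]]] compat]] x y yx U oU Ux.
have [al [Fal alU]] := (compat U).1 oU x Ux.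
(* [O] is the uniform interior of [{v | al (v, y)}], an open neighbourhood of [y]. *)
pose O := [set w | exists ep, F ep /\ [set v | ep (w, v)] `<=` [set v | al (v, y)]].
have oO : open O.
  apply/(compat O).2 => w [ep [Fep epal]].
  have [eta [Feta eta_ep]] := F_comp ep Fep.
  exists eta; split=> // w' eta_ww'; exists eta; split=> // v eta_w'v.
  by apply/epal/eta_ep; exists w'.
have Oy : O y by exists (rel_inv al); split; [exact: F_inv|].
have [ep [Fep epal]] := yx O oO Oy.
by apply: alU; apply: epal; apply: F_diag.
Qed.

End specialization.

Section partition_uniformity.
Variables (X : topologicalType) (P : set (set X)).

Definition block_rel : set (X * X) := [set p | exists2 D, P D & D p.1 /\ D p.2].

Lemma F_of_partition_block_rel : F_of_partition P block_rel.
Proof. by move=> D PD x y Dx Dy; exists D. Qed.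

Definition saturated (U : set X) := forall D x, P D -> D x -> U x -> D `<=` U.

Lemma compatible_partitionE :
  compatible (F_of_partition P) <-> forall U, open U <-> saturated U.
Proof.
suff nbhsE U : (forall x, U x -> exists al,
    F_of_partition P al /\ [set y | al (x, y)] `<=` U) <-> saturated U.
  split=> compat U; first exact: iff_trans (compat U) (nbhsE U).
  exact: iff_trans (compat U) (iff_sym (nbhsE U)).
split=> [nbhsU D x PD Dx Ux y Dy|satU x Ux].
  have [al [Fal alU]] := nbhsU x Ux; exact/alU/(Fal D).
exists block_rel; split; first exact: F_of_partition_block_rel.
by move=> y [E PE [/= Ex Ey]]; exact: satU E x PE Ex Ux y Ey.
Qed.

Hypothesis P_part : is_partition P.

Lemma partition_block D E x : P D -> P E -> D x -> E x -> D = E.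
Proof.
case: P_part => _ Pdisj _ PD PE Dx Ex; have [//|DE0] := Pdisj D E PD PE.
have : (D `&` E) x by [].
by rewrite DE0.
Qed.

Lemma partition_uniform_structure : uniform_structure (F_of_partition P).
Proof.
case: (P_part) => _ _ Pcover; split; first by exists setT.
split=> [al Fal x|]; first by have [D [PD Dx]] := Pcover x; exact: (Fal D PD x x).
split=> [al be Fal albe D PD x y Dx Dy|al be Fal Fbe D PD x y Dx Dy|
         al Fal D PD x y Dx Dy|al Fal].
- exact/albe/(Fal D).
- by split; [exact: (Fal D PD x y)|exact: (Fbe D PD x y)].
- exact: (Fal D PD y x).
exists block_rel; split; first exact: F_of_partition_block_rel.
move=> [x y] [z [[D PD [/= Dx Dz]] [E PE [/= Ez Ey]]]].
by apply: (Fal D PD) => //; rewrite (partition_block PD PE Dz Ez).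
Qed.

Hypothesis P_compat : compatible (F_of_partition P).

Lemma compatible_partition_open D : P D -> open D.
Proof.
move=> PD; apply/(compatible_partitionE.1 P_compat) => E x PE Ex Dx.
by rewrite (partition_block PE PD Ex Dx).
Qed.

Lemma compatible_partition_Vmin D a : P D -> D a -> Vmin a = D.
Proof.
have satE := compatible_partitionE.1 P_compat.
move=> PD Da; apply/seteqP; split; first exact: Vmin_sub (compatible_partition_open PD) Da.
by move=> x Dx U oU Ua; exact: (satE U).1 oU D a PD Da Ua x Dx.
Qed.

Lemma compatible_partition_VminE : [set D | exists a, D = Vmin a] = P.
Proof.
case: (P_part) => Pne _ Pcover; apply/seteqP; split=> [_ [a ->]|D PD].
  by have [D [PD Da]] := Pcover a; rewrite (compatible_partition_Vmin PD Da).
by have [a Da] := Pne D PD; exists a; rewrite (compatible_partition_Vmin PD Da).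
Qed.

End partition_uniformity.

Section finite_Vmin_partition.
Variable X : topologicalType.

Definition finite_open_Vmin_partition :=
  is_partition [set D | exists a : X, D = Vmin a] /\
  (forall a : X, finite_set (Vmin a) /\ open (Vmin a)).

Definition finite_uniform_partition := exists P : set (set X), [/\ is_partition P,
  (forall D, P D -> finite_set D), uniform_structure (F_of_partition P) &
  compatible (F_of_partition P)].

Lemma Vmin_partition_uniform : finite_open_Vmin_partition -> finite_uniform_partition.
Proof.
move=> [part Vfo]; have R0 := (R0_Vmin_partition X).2 part.
exists [set D | exists a, D = Vmin a]; split=> //.
- by move=> _ [a ->]; case: (Vfo a).
- exact: partition_uniform_structure.
apply/compatible_partitionE => U; split=> [oU _ x [a ->] ax Ux|satU].
  by rewrite -(R0_Vmin_eq R0 ax); exact: Vmin_sub.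
apply: alexandroff_open => [a|a Ua]; first by case: (Vfo a).
exact: (satU (Vmin a) a (ex_intro _ a erefl) (@Vmin_refl _ a) Ua).
Qed.

Lemma uniform_partition_Vmin : finite_uniform_partition -> finite_open_Vmin_partition.
Proof.
move=> [P [part Pfin _ compat]]; rewrite /finite_open_Vmin_partition.
rewrite (compatible_partition_VminE part compat); split=> // a.
have [_ _ /(_ a) [D [PD Da]]] := part.
rewrite (compatible_partition_Vmin part compat PD Da).
split; first exact: Pfin.
exact: (compatible_partition_open part compat PD).
Qed.

Lemma Vmin_partition_periodic_functional : finite_open_Vmin_partition ->
  exists f : X -> X, Per f = setT /\ is_functional_topology f.
Proof.
move=> [part Vfo]; have R0 := (R0_Vmin_partition X).2 part.
pose blk (a : X) : seq X := fset_set (Vmin a).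
have blkP a x : x \in blk a <-> Vmin a x.
  by rewrite /blk (in_fset_set (Vfo a).1) in_setE.
have blk_uniq a : uniq (blk a) := fset_uniq _.
have blk_self a : a \in blk a by apply/blkP; exact: Vmin_refl.
have blk_eq a x : x \in blk a -> blk x = blk a.
  by move/blkP => ax; rewrite /blk (R0_Vmin_eq R0 ax).
have VfE : Vf (block_cycle blk) = @Vmin X.
  have cycleP := iter_block_cycleP blk_uniq blk_self blk_eq.
  apply/funext => a; apply/seteqP; split=> x; first by move/cycleP/blkP/R0.
  by move/R0/blkP/cycleP.
exists (block_cycle blk); split.
  by apply/seteqP; split=> // x _; apply: block_cycle_periodic.
move=> U; split=> [oU|[A ->]].
  by exists U; rewrite VfE bigcup_Vmin // => a; apply: Vmin_sub.
by apply: bigcup_open => a _; rewrite VfE; case: (Vfo a).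
Qed.

End finite_Vmin_partition.

Section functional_topology.
Variables (X : topologicalType) (f : X -> X).

Lemma periodic_Vf_sym a x : Per f = setT -> Vf f a x -> Vf f x a.
Proof.
move=> f_per [n fnx]; have [p [p_gt0 fpx]] : Per f x by rewrite f_per.
exists (n * p - n)%N; rewrite -fnx -iterD subnK ?leq_pmulr //.
exact: iter_mul_period.
Qed.

Hypothesis f_top : is_functional_topology f.

Lemma open_Vf a : open (Vf f a).
Proof. by apply/f_top; exists [set a]; rewrite bigcup_set1. Qed.

Lemma Vmin_Vf : @Vmin X = Vf f.
Proof.
apply/funext => a; apply/seteqP; split=> x; first by apply; [exact: open_Vf|exists 0%N].
move=> [m fmx] U /f_top[A ->] [b Ab [n fnb]]; exists b => //.
by exists (n + m)%N; rewrite iterD fmx.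
Qed.

Lemma functional_k_primal k : (0 < k)%N -> k_primal X k.
Proof.
move=> k_gt0; exists (fun=> f) => a; rewrite bigcap_const; last by exists (Ordinal k_gt0).
by rewrite -Vmin_Vf; apply: smallest_open_nbhd_Vmin; rewrite Vmin_Vf; exact: open_Vf.
Qed.

Lemma uniformizable_functional_periodic : uniformizable X -> Per f = setT.
Proof.
move=> /uniformizable_R0 R0; apply/seteqP; split=> // x _.
have : Vf f (f x) x by exists 1%N.
rewrite -Vmin_Vf => /R0; rewrite Vmin_Vf => -[n fnx].
by exists n.+1; rewrite iterSr.
Qed.

Lemma periodic_functional_partition : Per f = setT -> finite_open_Vmin_partition X.
Proof.
move=> f_per; have R0 : R0_space X by move=> x y; rewrite Vmin_Vf; exact: periodic_Vf_sym.
split=> [|a]; first exact/R0_Vmin_partition.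
rewrite Vmin_Vf; split; last exact: open_Vf.
apply: (sub_finite_set _ (finite_iter_component f a)) => x fxa.
by split; [exact: periodic_Vf_sym|].
Qed.

End functional_topology.

Section k_primal.
Variables (X : topologicalType) (k : nat).

Lemma k_primal_alexandroff : k_primal X k -> alexandroff X.
Proof. by move=> [fs fsP] a; rewrite -(smallest_open_nbhdE (fsP a)); case: (fsP a). Qed.

Lemma R0_k_primal_finite : R0_space X -> (0 < k)%N -> k_primal X k ->
  forall a : X, finite_set (Vmin a).
Proof.
move=> R0 k_gt0 [fs fsP] a; pose f := fs (Ordinal k_gt0).
have Vmin_Vf b x : Vmin b x -> Vf f b x.
  by rewrite -(smallest_open_nbhdE (fsP b)); apply.
apply: (sub_finite_set _ (finite_iter_component f a)) => x ax.
by split; apply: Vmin_Vf => //; apply: R0.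
Qed.

End k_primal.

Unset Implicit Arguments.

Theorem mainTheorem8 (X : topologicalType) (k : nat) (hk : (1 <= k)%N) :
  let P1 := uniformizable X /\ functional_alexandroff X in
  let P1' := uniformizable X /\ k_primal X k in
  let P2 := [/\ uniformizable X, alexandroff X & forall x : X, finite_set (Vmin x)] in
  let P3 := is_partition [set D | exists a : X, D = Vmin a] /\
            (forall a : X, finite_set (Vmin a) /\ open (Vmin a)) in
  let P4 := exists P : set (set X), [/\ is_partition P,
              (forall D, P D -> finite_set D),
              uniform_structure (F_of_partition P) &
              compatible (F_of_partition P)] in
  let P5 := exists f : X -> X, Per f = setT /\ is_functional_topology f in
  [/\ P1 <-> P1', P1 <-> P2, P1 <-> P3, P1 <-> P4 & P1 <-> P5].
Proof.
move=> P1 P1' P2 P3 P4 P5.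
have P3_P4 : P3 <-> P4 := conj (@Vmin_partition_uniform X) (@uniform_partition_Vmin X).
have P3_P5 : P3 <-> P5.
  split=> [|[f [f_per f_top]]]; first exact: Vmin_partition_periodic_functional.
  exact: periodic_functional_partition f_top f_per.
have P3_unif : P3 -> uniformizable X.
  by move/P3_P4=> [P [_ _ Punif Pcompat]]; exists (F_of_partition P).
have P1_P5 : P1 <-> P5.
  split=> [[unif [f f_top]]|P5X].
    by exists f; split; [exact: uniformizable_functional_periodic|].
  split; first exact/P3_unif/P3_P5.
  by case: P5X => f [_ f_top]; exists f.
have P2_P3 : P2 <-> P3.
  split=> [[/uniformizable_R0/R0_Vmin_partition part alex fin]|P3X]; first by split.
  by split=> [|a|a]; [exact: P3_unif|case: (P3X.2 a)..].
have P1_P1' : P1 <-> P1'.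
  split=> [[unif [f f_top]]|[unif kp]].
    by split; last exact: (functional_k_primal f_top hk).
  apply/P1_P5/P3_P5/P2_P3; split=> //; first exact: k_primal_alexandroff kp.
  exact: R0_k_primal_finite (uniformizable_R0 unif) hk kp.
by split; tauto.
Qed.
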